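(* Let $X$ and $Y$ be two real random variables satisfying $X \leq_{cx} Y$, with distribution functions $F_X$ and $F_Y$ respectively. For a given $\alpha \in \mathbb{R}$, let \[h = \min\left[1,\ \max\left\{w : w (x-\alpha) \leq \int_{-\infty}^x F_Y(t)\, \mathrm{d} t \ \text{ for all } x \in \mathbb{R}\right\} \right].\] Then $F_X(\alpha) \leq h$. Furthermore, there exists a random variable $\tilde X$, with distribution function $F_{\tilde X}$, such that $\tilde X \leq_{cx} Y$ and $F_{\tilde X}(\alpha) = h$.
   Context: For random variables $X$ and $Y$, $X \leq_{cx} Y$ means $\mathrm{E}\{h(X)\} \leq \mathrm{E}\{h(Y)\}$ for every convex function $h$ for which the expectations exist. *)

From HB Require Import structures.
From mathcomp Require Import all_boot all_order all_algebra.
From mathcomp Require Import all_classical all_reals all_analysis.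
Set Implicit Arguments. Unset Strict Implicit. Unset Printing Implicit Defensive.
Import Order.TTheory GRing.Theory Num.Theory.
Import numFieldNormedType.Exports.
Local Open Scope classical_set_scope.
Local Open Scope ring_scope.

Definition expectation_exists d (T : measurableType d) (R : realType)
  (P : probability T R) (g : T -> R) : Prop :=
  (\int[P]_x ((fun y => (g y)%:E)^\+ x) < +oo)%E \/
  (\int[P]_x ((fun y => (g y)%:E)^\- x) < +oo)%E.

Definition cx_le d d' (T : measurableType d) (T' : measurableType d')
  (R : realType) (P : probability T R) (X : {RV P >-> R})
  (Q : probability T' R) (Y : {RV Q >-> R}) : Prop :=
  forall h : R -> R, convex_function (E := R^o) setT h ->
    expectation_exists P (h \o X) -> expectation_exists Q (h \o Y) ->
    (\int[P]_x (h (X x))%:E <= \int[Q]_y (h (Y y))%:E)%E.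

Definition int_cdf d (T : measurableType d) (R : realType)
  (P : probability T R) (Y : {RV P >-> R}) (x : R) : \bar R :=
  (\int[lebesgue_measure]_(t in `]-oo, x]) cdf Y t)%E.

(* h = min [1, max { w : w (x - alpha) <= \int_{-oo}^x F_Y for all x }] ;
   the max is taken as the supremum (the set is a closed interval). *)
Definition hbound d (T : measurableType d) (R : realType)
  (P : probability T R) (Y : {RV P >-> R}) (alpha : R) : R :=
  Num.min 1 (sup [set w : R | forall x : R,
                   ((w * (x - alpha))%:E <= int_cdf Y x)%E]).

(* By Fubini, x |-> \int_{-oo}^x F_Y is the stop-loss transform x |-> E (x - Y)^+,
   which is monotone in the convex order; since F_X(alpha) (x - alpha) <= E (x - X)^+,
   F_X(alpha) is an admissible slope w, hence F_X(alpha) <= h.  The extremal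
   variable is two-point: mass h at alpha and mass 1 - h at the point giving it
   the mean E Y (when h = 1 it is the constant E Y, and E Y <= alpha because
   E (Y - x)^+ vanishes as x -> +oo).  Its stop-loss transform is below that of Y
   by the choice of h and Jensen's inequality.  This is enough for the convex
   order: every hinge (c + e y)^+ is an affine function plus a nonnegative
   multiple of some (k - y)^+, and a convex function lies above the maximum of
   its support lines at the two atoms, which is such a hinge plus an affine
   function and agrees with it at both atoms. *)

From HB Require Import structures.
From mathcomp Require Import all_boot all_order all_algebra.
From mathcomp Require Import all_classical all_reals all_analysis.
From mathcomp Require Import ring lra measurable_realfun.
Import Order.TTheory GRing.Theory Num.Theory.
Set Implicit Arguments. Unset Strict Implicit. Unset Printing Implicit Defensive.
Import numFieldNormedType.Exports.
Local Open Scope classical_set_scope.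
Local Open Scope ring_scope.

Section integrated_cdf.
Context d (T : measurableType d) (R : realType) (P : probability T R).
Local Open Scope ereal_scope.

Lemma int_cdfE (Y : {RV P >-> R}) (x : R) :
  int_cdf Y x = \int[P]_w (Num.max (x - Y w) 0)%:E.
Proof.
pose A := [set p : R * T | (p.1 <= x)%R /\ (Y p.2 <= p.1)%R].
have mA : measurable A.
  by apply: measurableI; rewrite -[X in measurable X]setTI;
    apply: measurable_fun_le => //; exact: measurableT_comp.
have := indic_fubini_tonelli lebesgue_measure P mA.
rewrite indic_fubini_tonelli_FE // indic_fubini_tonelli_GE //= => fubini.
rewrite /int_cdf integral_mkcond.
transitivity (\int[P]_w lebesgue_measure (ysection A w)); last first.
  apply: eq_integral => w _.
  have -> : ysection A w = `[Y w, x]%classic.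
    apply/seteqP; split => t; rewrite /ysection /= in_itv /= inE.
      by case=> -> ->.
    by case/andP.
  rewrite lebesgue_measure_itv /= lte_fin.
  case: ltP => [xY|Yx]; last by rewrite (max_idPr _) // subr_le0.
  by rewrite -EFinD (max_idPl _) // subr_ge0 ltW.
rewrite -fubini; apply: eq_integral => t _; rewrite /patch.
case: ifPn => [|/negP] tx.
  move: tx; rewrite inE /= in_itv /= => tx; congr (P _).
  apply/seteqP; split => w; rewrite /xsection /= in_itv /= inE //.
  by case.
have -> : xsection A t = set0; last by rewrite measure0.
apply/seteqP; split => w //; rewrite /xsection /= inE => -[xt _].
by apply: tx; rewrite inE /= in_itv.
Qed.

End integrated_cdf.

Section integral_monotone.
Local Open Scope ereal_scope.
Context d (T : measurableType d) (R : realType) (mu : {measure set T -> \bar R}).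

(* Unlike [le_integral], no measurability is needed (the composition of a
   convex function with a random variable is not known to be measurable here):
   nonnegative integrals are suprema over the simple functions below them. *)
Lemma le_integralT (f g : T -> \bar R) : (forall x, f x <= g x) ->
  \int[mu]_x f x <= \int[mu]_x g x.
Proof.
move=> fg; have fgT : {in setT, forall x, f x <= g x} by move=> x _; exact: fg.
have le_nnintegral (u v : T -> \bar R) : (forall x, 0 <= u x) ->
    (forall x, u x <= v x) -> \int[mu]_x u x <= \int[mu]_x v x.
  move=> u0 uv; have v0 x : 0 <= v x := le_trans (u0 x) (uv x).
  rewrite !ge0_integralTE //; apply: ereal_sup_le => _ [h /= hu <-].
  by exists h => //= x; exact: le_trans (hu x) (uv x).
rewrite [leLHS]integralE [leRHS]integralE; apply: leeB.
  apply: le_nnintegral => [x|x]; first exact: funepos_ge0.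
  by apply: (funepos_le fgT); rewrite in_setT.
apply: le_nnintegral => [x|x]; first exact: funeneg_ge0.
by apply: (funeneg_le fgT); rewrite in_setT.
Qed.

End integral_monotone.

Section convex_real.
Context (R : realType) (phi : R -> R).
Hypothesis phi_convex : convex_function (E := R^o) setT phi.

Lemma convex_chord (u a v : R) : u < a -> a < v ->
  (phi a - phi u) * (v - a) <= (phi v - phi a) * (a - u).
Proof.
move=> ua av; have vu : 0 < v - u by rewrite subr_gt0 (lt_trans ua av).
pose l := (v - a) / (v - u).
have l0 : 0 <= l by rewrite divr_ge0 // ltW // subr_gt0.
have l1 : l <= 1 by rewrite ler_pdivrMr // mul1r lerD2l lerN2 ltW.
have := phi_convex (@Itv01 _ l l0 l1) (in_setT u) (in_setT v).
rewrite !convRE -[X in phi X]/(l * u + (1 - l) * v).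
rewrite (_ : l * u + (1 - l) * v = a); last by rewrite /l; field; rewrite gt_eqF.
move=> /(ler_wpM2r (ltW vu)).
have -> : (l * phi u + (1 - l) * phi v) * (v - u) =
          (v - a) * phi u + (a - u) * phi v.
  by rewrite /l; field; rewrite gt_eqF.
nra.
Qed.

(* A subgradient at [a]: the supremum of the slopes of the chords ending at [a]. *)
Lemma convex_support_line (a : R) : exists s, forall t, phi a + s * (t - a) <= phi t.
Proof.
pose S := [set (phi a - phi u) / (a - u) | u in [set u | u < a]].
have S_ub v : a < v -> ubound S ((phi v - phi a) / (v - a)).
  move=> av _ [u /= ua <-].
  rewrite ler_pdivrMr ?subr_gt0 // mulrAC ler_pdivlMr ?subr_gt0 //.
  exact: convex_chord.
have hS : has_sup S.
  split; first by exists ((phi a - phi (a - 1)) / (a - (a - 1))), (a - 1);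
    rewrite //= gtrBl.
  by exists ((phi (a + 1) - phi a) / (a + 1 - a)); apply: S_ub; rewrite ltrDl.
exists (sup S) => t; have [lt_ta|gt_ta|->] := ltgtP t a.
- have : (phi a - phi t) / (a - t) <= sup S by apply: sup_upper_bound => //; exists t.
  rewrite ler_pdivrMr ?subr_gt0 // => H; nra.
- have : sup S <= (phi t - phi a) / (t - a) by apply: ge_sup; [exact: hS.1 | exact: S_ub].
  rewrite ler_pdivlMr ?subr_gt0 // => H; nra.
- by rewrite subrr mulr0 addr0.
Qed.

End convex_real.

Lemma maxr0_split (R : realDomainType) (x : R) : Num.max x 0 = x + Num.max (- x) 0.
Proof.
have [x0|x0] := leP x 0; first by rewrite (max_idPl _) ?subrr // oppr_ge0.
by rewrite (max_idPr _) ?addr0 // oppr_le0 ltW.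
Qed.

Lemma hinge_decomposition (R : realFieldType) (c e : R) :
  exists k a0 b0 g, 0 <= g /\
    forall y, Num.max (c + e * y) 0 = a0 + b0 * y + g * Num.max (k - y) 0.
Proof.
have [e0|e0|->] := ltgtP e 0.
- exists (- c / e), 0, 0, (- e); split; first by rewrite oppr_ge0 ltW.
  move=> y; rewrite mul0r !add0r maxr_pMr ?oppr_ge0 ?ltW // mulr0.
  by congr Num.max; field; rewrite lt_eqF.
- pose k := - c / e; exists k, c, e, e; split; first exact: ltW.
  have -> : c = - (e * k) by rewrite /k; field; rewrite gt_eqF.
  move=> y; have [ky|yk] := leP k y.
  + have -> : Num.max (k - y) 0 = 0 by apply/max_idPr; rewrite subr_le0.
    have -> : Num.max (- (e * k) + e * y) 0 = - (e * k) + e * y.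
      by apply/max_idPl; nra.
    ring.
  + have -> : Num.max (k - y) 0 = k - y by apply/max_idPl; rewrite subr_ge0 ltW.
    have -> : Num.max (- (e * k) + e * y) 0 = 0 by apply/max_idPr; nra.
    ring.
- by exists 0, (Num.max c 0), 0, 0; split => // y; rewrite !mul0r !addr0.
Qed.

Section hinge_expectation.
Context d (T : measurableType d) (R : realType) (P : probability T R).
Variable Y : {RV P >-> R}.
Hypothesis Yint : P.-integrable setT (EFin \o Y).

Lemma integrable_hinge (c e : R) :
  P.-integrable setT (EFin \o (fun w => Num.max (c + e * Y w) 0)).
Proof.
apply: (@le_integrable _ _ _ P setT measurableT _ (fun w => (`|c| + `|e| * `|Y w|)%:E)).
- apply/measurable_EFinP; apply: measurable_maxr => //.
  by apply: measurable_funD => //; apply: measurable_funM.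
- move=> w _; rewrite !abse_EFin lee_fin ger0_norm ?le_max ?lexx ?orbT //.
  rewrite ger0_norm ?addr_ge0 ?mulr_ge0 // ge_max addr_ge0 ?mulr_ge0 // andbT.
  by rewrite (le_trans (ler_norm _)) // (le_trans (ler_normD _ _)) // normrM.
- rewrite (_ : (fun w => _) =
    (fun=> `|c|%:E) \+ (fun w : T => (`|e|%:E * `|Y w|%:E)%E)) //.
  apply: integrableD (finite_measure_integrable_cst _ _ _) _ => //.
  by apply: integrableZl => //; exact: integrable_norm.
Qed.

Lemma integral_EFin (f : T -> R) : P.-integrable setT (EFin \o f) ->
  (\int[P]_w (f w)%:E = (\int[P]_w f w)%:E)%E.
Proof. by move=> fint; rewrite fineK //; exact: integrable_fin_num. Qed.

Lemma integral_affine (f : T -> R) (a b g : R) : P.-integrable setT (EFin \o f) ->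
  (\int[P]_w (a + b * Y w + g * f w)%:E =
   (a + b * \int[P]_w Y w + g * \int[P]_w f w)%:E)%E.
Proof.
move=> fint; have iY := integrableZl measurableT b Yint.
have iF := integrableZl measurableT g fint.
have icst := finite_measure_integrable_cst P a measurableT.
rewrite (_ : (fun w => _) = ((fun=> a%:E) \+ (fun w => b%:E * (Y w)%:E)) \+
    (fun w => g%:E * (f w)%:E))%E; last first.
  by apply/funext => w; rewrite /= -!EFinM -!EFinD.
rewrite !integralD //; last exact: integrableD.
rewrite integral_cst // !integralZl //.
by rewrite -[X in (a%:E * X)%E]/(P setT) probability_setT mule1 !integral_EFin.
Qed.

Lemma Rintegral_affine (f : T -> R) (a b g : R) : P.-integrable setT (EFin \o f) ->
  \int[P]_w (a + b * Y w + g * f w) = a + b * \int[P]_w Y w + g * \int[P]_w f w.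
Proof. by move=> fint; rewrite /Rintegral integral_affine. Qed.

Lemma integrable_stop_loss (k : R) :
  P.-integrable setT (EFin \o (fun w => Num.max (k - Y w) 0)).
Proof.
by rewrite (_ : (fun w => _) = fun w => Num.max (k + (-1) * Y w) 0);
  [exact: integrable_hinge | apply/funext => w; rewrite mulN1r].
Qed.

Lemma integrable_call (k : R) :
  P.-integrable setT (EFin \o (fun w => Num.max (Y w - k) 0)).
Proof.
by rewrite (_ : (fun w => _) = fun w => Num.max (- k + 1 * Y w) 0);
  [exact: integrable_hinge | apply/funext => w; rewrite mul1r addrC].
Qed.

Lemma put_call_parity (k : R) : \int[P]_w Num.max (k - Y w) 0 =
  k - \int[P]_w Y w + \int[P]_w Num.max (Y w - k) 0.
Proof.
have -> : \int[P]_w Num.max (k - Y w) 0 =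
          \int[P]_w (k + (-1) * Y w + 1 * Num.max (Y w - k) 0).
  by apply: eq_Rintegral => w _; rewrite [LHS]maxr0_split opprB mulN1r mul1r.
by rewrite Rintegral_affine ?mulN1r ?mul1r //; exact: integrable_call.
Qed.

Lemma stop_loss_ge_mean (k : R) :
  Num.max (k - \int[P]_w Y w) 0 <= \int[P]_w Num.max (k - Y w) 0.
Proof.
rewrite ge_max Rintegral_ge0 ?andbT => [|w _]; last by rewrite le_max lexx orbT.
by rewrite put_call_parity lerDl Rintegral_ge0 // => w _; rewrite le_max lexx orbT.
Qed.

Lemma cvg_call_tail :
  (fun n : nat => \int[P]_w Num.max (Y w - n%:R) 0) @ \oo --> 0.
Proof.
apply: (fine_cvg (f := fun n : nat => \int[P]_w (Num.max (Y w - n%:R) 0)%:E)%E).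
have := @dominated_cvg _ _ _ P setT measurableT
  (fun n w => (Num.max (Y w - n%:R) 0)%:E) (cst 0%E) (fun w => `|Y w|%:E).
rewrite integral0; apply => //.
- move=> n; apply/measurable_EFinP; apply: measurable_maxr => //.
  exact: measurable_funB.
- move=> w _; apply: cvg_near_cst; near=> n.
  rewrite (max_idPr _) // subr_le0.
  by near: n; exact: nbhs_infty_ger.
- exact: integrable_norm.
- move=> n w _; rewrite abse_EFin lee_fin ger0_norm ?le_max ?lexx ?orbT //.
  rewrite ge_max normr_ge0 andbT (le_trans _ (ler_norm _)) // lerBlDr lerDl.
  exact: ler0n.
Unshelve. all: by end_near.
Qed.

End hinge_expectation.

Section two_point_domination.
Context d (T : measurableType d) (R : realType) (P : probability T R).
Variable Y : {RV P >-> R}.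
Hypothesis Yint : P.-integrable setT (EFin \o Y).
Variables (p a b : R).
Hypothesis p01 : 0 <= p <= 1.
Hypothesis two_point_mean : p * a + (1 - p) * b = \int[P]_w Y w.
Hypothesis two_point_stop_loss : forall k,
  p * Num.max (k - a) 0 + (1 - p) * Num.max (k - b) 0 <= \int[P]_w Num.max (k - Y w) 0.

Lemma two_point_le_hinge (c e : R) :
  p * Num.max (c + e * a) 0 + (1 - p) * Num.max (c + e * b) 0 <=
  \int[P]_w Num.max (c + e * Y w) 0.
Proof.
have [k [a0 [b0 [g [g0 decomp]]]]] := hinge_decomposition c e.
have -> : \int[P]_w Num.max (c + e * Y w) 0 =
          \int[P]_w (a0 + b0 * Y w + g * Num.max (k - Y w) 0).
  by apply: eq_Rintegral => w _; exact: decomp.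
rewrite !decomp Rintegral_affine ?integrable_stop_loss // -two_point_mean.
have := two_point_stop_loss k; nra.
Qed.

(* [phi] lies above the maximum of its support lines at [a] and [b], which is
   an affine function plus a hinge and coincides with [phi] at [a] and [b]. *)
Lemma two_point_le_convex (phi : R -> R) : convex_function (E := R^o) setT phi ->
  ((p * phi a + (1 - p) * phi b)%:E <= \int[P]_w (phi (Y w))%:E)%E.
Proof.
move=> phi_convex.
have [sa la_le] := convex_support_line phi_convex a.
have [sb lb_le] := convex_support_line phi_convex b.
pose c := phi b - sb * b - phi a + sa * a; pose e := sb - sa.
have hingeE y : c + e * y = phi b + sb * (y - b) - (phi a + sa * (y - a)).
  by rewrite /c /e; ring.
have minorant y : phi a - sa * a + sa * y + 1 * Num.max (c + e * y) 0 <= phi y.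
  have [_|_] := leP 0 (c + e * y); rewrite mul1r ?hingeE.
    by have := lb_le y; nra.
  by have := la_le y; nra.
have minorantY w : ((phi a - sa * a + sa * Y w + 1 * Num.max (c + e * Y w) 0)%:E
    <= (phi (Y w))%:E)%E by rewrite lee_fin; exact: minorant.
apply: le_trans (le_integralT P minorantY).
rewrite integral_affine ?lee_fin //; last exact: integrable_hinge.
have ha : Num.max (c + e * a) 0 = 0.
  by apply/max_idPr; rewrite hingeE subrr mulr0 addr0; have := lb_le a; lra.
have hb : Num.max (c + e * b) 0 = phi b - phi a - sa * (b - a).
  by have := la_le b; rewrite hingeE subrr mulr0 addr0 => ?; rewrite (max_idPl _); lra.
have := two_point_le_hinge c e; rewrite ha hb -two_point_mean; nra.
Qed.

End two_point_domination.

Lemma convex_stop_loss (R : realType) (x : R) :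
  convex_function (E := R^o) setT (fun t : R => Num.max (x - t) 0).
Proof.
move=> l u v _ _.
rewrite !convRE -[X in Num.max (x - X) 0]/(l%:num * u + (1 - l%:num) * v).
have [l0 l1] : 0 <= l%:num /\ l%:num <= 1 by split; [exact: ge0 | exact: le1].
have [u1 u0] : x - u <= Num.max (x - u) 0 /\ 0 <= Num.max (x - u) 0.
  by rewrite !le_max !lexx orbT.
have [v1 v0] : x - v <= Num.max (x - v) 0 /\ 0 <= Num.max (x - v) 0.
  by rewrite !le_max !lexx orbT.
rewrite /unstable.onem ge_max; apply/andP; split; nra.
Qed.

Section convex_order_stop_loss.
Context dX dY (TX : measurableType dX) (TY : measurableType dY) (R : realType).
Variables (PX : probability TX R) (PY : probability TY R).
Variables (X : {RV PX >-> R}) (Y : {RV PY >-> R}).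
Hypothesis Xint : PX.-integrable setT (EFin \o X).
Hypothesis Yint : PY.-integrable setT (EFin \o Y).

Lemma cx_le_stop_loss (x : R) : cx_le X Y ->
  \int[PX]_w Num.max (x - X w) 0 <= \int[PY]_w Num.max (x - Y w) 0.
Proof.
have stop_loss_exists d (T : measurableType d) (P : probability T R) (Z : {RV P >-> R}) :
    P.-integrable setT (EFin \o Z) ->
    expectation_exists P ((fun t => Num.max (x - t) 0) \o Z).
  move=> Zint; left; rewrite ltey_eq integrable_pos_fin_num //.
  exact: integrable_stop_loss.
move=> /(_ _ (convex_stop_loss x) (stop_loss_exists _ _ _ _ Xint)
  (stop_loss_exists _ _ _ _ Yint)) /=.
by rewrite !integral_EFin ?lee_fin //; exact: integrable_stop_loss.
Qed.

End convex_order_stop_loss.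

Lemma cdf_mul_le_stop_loss d (T : measurableType d) (R : realType)
    (P : probability T R) (X : {RV P >-> R}) (a x : R) :
  P.-integrable setT (EFin \o X) ->
  fine (cdf X a) * (x - a) <= \int[P]_w Num.max (x - X w) 0.
Proof.
move=> Xint; have F0 : 0 <= fine (cdf X a) by apply: fine_ge0; exact: cdf_ge0.
have sl0 : 0 <= \int[P]_w Num.max (x - X w) 0.
  by apply: Rintegral_ge0 => w _; rewrite le_max lexx orbT.
have [xa|ax] := leP x a; first by apply: le_trans sl0; nra.
pose B := X @^-1` `]-oo, a].
have mB : measurable B by rewrite -[B]setTI; exact: measurable_funP.
have iB : P.-integrable setT (EFin \o \1_B) by exact: integrable_indic.
have -> : fine (cdf X a) * (x - a) = \int[P]_w ((x - a) * \1_B w).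
  by rewrite RintegralZl // /Rintegral integral_indic // setIT mulrC.
apply: le_Rintegral => //; last first.
- move=> w _; rewrite indicE; case: (boolP (w \in B)) => [|_].
    by rewrite inE /= mulr1 /B /preimage /= in_itv /= => Xwa; rewrite le_max lerB.
  by rewrite mulr0 le_max lexx orbT.
- exact: integrable_stop_loss.
- rewrite (_ : EFin \o _ = fun w => (x - a)%:E * (\1_B w)%:E)%E.
    exact: integrableZl.
  by apply/funext => w; rewrite /= EFinM.
Qed.

Definition two_point (R : realType) (a b : R) (x : bool) : R := if x then a else b.

Lemma measurable_two_point (R : realType) (a b : R) : measurable_fun setT (two_point a b).
Proof. by []. Qed.

HB.instance Definition _ (R : realType) (a b : R) :=
  isMeasurableFun.Build _ _ bool R (two_point a b) (measurable_two_point a b).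

Section two_point_law.
Context (R : realType) (p : R).
Hypothesis p01 : 0 <= p <= 1.

Lemma integral_bernoulli_probE (f : bool -> R) :
  (\int[bernoulli_prob p]_x (f x)%:E = (p * f true + (1 - p) * f false)%:E)%E.
Proof.
rewrite integralE !integral_bernoulli_prob // !funeposE !funenegE /=.
rewrite -!EFin_max -!EFinM -!EFinD /unstable.onem; congr (_%:E).
by rewrite (maxr0_split (f true)) (maxr0_split (f false)); ring.
Qed.

Lemma cdf_two_point (a b x : R) :
  cdf (two_point a b : {RV bernoulli_prob p >-> R}) x =
  (p * ((a <= x)%R)%:R + (1 - p) * ((b <= x)%R)%:R)%:E.
Proof.
apply: eq_trans (bernoulli_probE p01 _) _; rewrite !diracE.
have memE t : (t \in two_point a b @^-1` `]-oo, x]) = (two_point a b t <= x).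
  apply/idP/idP => [/set_mem|?]; first by rewrite /= in_itv.
  by apply/mem_set; rewrite /= in_itv.
by rewrite !memE -!EFinM -EFinD.
Qed.

End two_point_law.

Lemma cx_le_two_point d (T : measurableType d) (R : realType) (P : probability T R)
    (Y : {RV P >-> R}) (p a b : R) :
  P.-integrable setT (EFin \o Y) -> 0 <= p <= 1 ->
  p * a + (1 - p) * b = \int[P]_w Y w ->
  (forall k, p * Num.max (k - a) 0 + (1 - p) * Num.max (k - b) 0 <=
             \int[P]_w Num.max (k - Y w) 0) ->
  cx_le (two_point a b : {RV bernoulli_prob p >-> R}) Y.
Proof.
move=> Yint p01 mean stop_loss phi phi_convex _ _.
by rewrite integral_bernoulli_probE //=; exact: two_point_le_convex.
Qed.

Definition max_slope d (T : measurableType d) (R : realType) (P : probability T R)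
    (Y : {RV P >-> R}) (alpha : R) : R :=
  sup [set w : R | forall x : R, ((w * (x - alpha))%:E <= int_cdf Y x)%E].

Section max_slope.
Context d (T : measurableType d) (R : realType) (P : probability T R).
Variables (Y : {RV P >-> R}) (alpha : R).
Hypothesis Yint : P.-integrable setT (EFin \o Y).

Let slopes := [set w : R | forall x : R, ((w * (x - alpha))%:E <= int_cdf Y x)%E].

Let slopesE w :
  slopes w <-> forall x, w * (x - alpha) <= \int[P]_t Num.max (x - Y t) 0.
Proof.
have int_cdfR x : int_cdf Y x = (\int[P]_t Num.max (x - Y t) 0)%:E.
  by rewrite int_cdfE integral_EFin //; exact: integrable_stop_loss.
by split => le_w x; have := le_w x; rewrite int_cdfR lee_fin.
Qed.

Let stop_loss_ge0 x : 0 <= \int[P]_t Num.max (x - Y t) 0.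
Proof. by apply: Rintegral_ge0 => t _; rewrite le_max lexx orbT. Qed.

Let slopes_ub x :
  alpha < x -> ubound slopes (\int[P]_t Num.max (x - Y t) 0 / (x - alpha)).
Proof. by move=> ax w /slopesE le_w; rewrite ler_pdivlMr ?subr_gt0. Qed.

Let has_sup_slopes : has_sup slopes.
Proof.
split; first by exists 0; apply/slopesE => x; rewrite mul0r.
by exists (\int[P]_t Num.max (alpha + 1 - Y t) 0 / (alpha + 1 - alpha));
  apply: slopes_ub; rewrite ltrDl.
Qed.

Lemma le_max_slope w : (forall x, w * (x - alpha) <= \int[P]_t Num.max (x - Y t) 0) ->
  w <= max_slope Y alpha.
Proof. by move=> /slopesE; exact: sup_upper_bound. Qed.

Lemma max_slope_ge0 : 0 <= max_slope Y alpha.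
Proof. by apply: le_max_slope => x; rewrite mul0r. Qed.

Lemma max_slope_mul_le x :
  max_slope Y alpha * (x - alpha) <= \int[P]_t Num.max (x - Y t) 0.
Proof.
have [xa|ax] := leP x alpha.
  apply: le_trans (stop_loss_ge0 x); apply: mulr_ge0_le0 max_slope_ge0 _.
  by rewrite subr_le0.
rewrite -ler_pdivlMr ?subr_gt0 //.
by apply: ge_sup; [exact: has_sup_slopes.1 | exact: slopes_ub].
Qed.

Lemma mean_le_of_max_slope_ge1 : 1 <= max_slope Y alpha -> \int[P]_t Y t <= alpha.
Proof.
move=> h1; rewrite -subr_le0; apply: (cvgr_to_ge (cvg_call_tail Yint)).
near=> n; have := max_slope_mul_le n%:R; rewrite put_call_parity //.
have : alpha < n%:R by near: n; exact: nbhs_infty_gtr.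
nra.
Unshelve. all: by end_near.
Qed.

Lemma lt_mean_of_max_slope_lt1 : max_slope Y alpha < 1 -> alpha < \int[P]_t Y t.
Proof.
apply: contraTT; rewrite -!leNgt => mean_le.
apply: le_max_slope => x; rewrite mul1r; apply: le_trans (stop_loss_ge_mean Yint x).
by rewrite le_max lerB.
Qed.

Lemma alpha_lt_two_point_atom (h := max_slope Y alpha) : h < 1 ->
  alpha < (\int[P]_t Y t - h * alpha) / (1 - h).
Proof.
move=> h1; rewrite ltr_pdivlMr ?subr_gt0 //.
by have := lt_mean_of_max_slope_lt1 h1; nra.
Qed.

(* [b] is the second atom of the law with mass [h] at [alpha] and mean [E Y]. *)
Lemma stop_loss_two_point_le (h := max_slope Y alpha)
    (b := (\int[P]_t Y t - h * alpha) / (1 - h)) :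
  h < 1 -> forall k,
  h * Num.max (k - alpha) 0 + (1 - h) * Num.max (k - b) 0 <=
  \int[P]_t Num.max (k - Y t) 0.
Proof.
move=> h1 k; have h0 := max_slope_ge0.
have mean : h * alpha + (1 - h) * b = \int[P]_t Y t.
  by rewrite /b; field; rewrite subr_eq0 gt_eqF.
have ab : alpha < b := alpha_lt_two_point_atom h1.
have [ka|ak] := leP k alpha.
  have -> : Num.max (k - alpha) 0 = 0 by apply/max_idPr; rewrite subr_le0.
  have -> : Num.max (k - b) 0 = 0.
    by apply/max_idPr; rewrite subr_le0 (le_trans ka) ?ltW.
  by rewrite !mulr0 addr0.
have -> : Num.max (k - alpha) 0 = k - alpha by apply/max_idPl; rewrite subr_ge0 ltW.
have [kb|bk] := leP k b.
  have -> : Num.max (k - b) 0 = 0 by apply/max_idPr; rewrite subr_le0.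
  by rewrite mulr0 addr0; exact: max_slope_mul_le.
have -> : Num.max (k - b) 0 = k - b by apply/max_idPl; rewrite subr_ge0 ltW.
apply: le_trans (stop_loss_ge_mean Yint k); rewrite le_max -mean; apply/orP; left.
nra.
Qed.

Lemma cdf_le_max_slope dX (TX : measurableType dX) (PX : probability TX R)
    (X : {RV PX >-> R}) :
  PX.-integrable setT (EFin \o X) -> cx_le X Y -> fine (cdf X alpha) <= max_slope Y alpha.
Proof.
move=> Xint cxXY; apply: le_max_slope => x.
exact: le_trans (cdf_mul_le_stop_loss _ _ Xint) (cx_le_stop_loss Xint Yint x cxXY).
Qed.

End max_slope.

Theorem lemma2 (d : measure_display) (T : measurableType d) (R : realType)
  (P : probability T R) (X Y : {RV P >-> R}) (alpha : R) :
  P.-integrable setT (EFin \o X) -> P.-integrable setT (EFin \o Y) ->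
  cx_le X Y ->
  (cdf X alpha <= (hbound Y alpha)%:E)%E /\
  exists (d' : measure_display) (T' : measurableType d')
         (Q : probability T' R) (Xt : {RV Q >-> R}),
    cx_le Xt Y /\ cdf Xt alpha = (hbound Y alpha)%:E.
Proof.
move=> Xint Yint cxXY; rewrite /hbound -/(max_slope Y alpha).
set h := max_slope Y alpha; set m := \int[P]_t Y t.
split.
  rewrite -[cdf X alpha]fineK ?fin_num_measure // lee_fin le_min.
  by rewrite -lee_fin fineK ?fin_num_measure ?cdf_le1 // cdf_le_max_slope.
have [h1|h1] := leP 1 h.
  exists _, _, (bernoulli_prob 1), (two_point m m); split.
    apply: cx_le_two_point => //; first by rewrite ler01 lexx.
      by rewrite subrr mul0r addr0 mul1r.
    by move=> k; rewrite subrr mul0r addr0 mul1r; exact: stop_loss_ge_mean.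
  rewrite cdf_two_point ?ler01 ?lexx // mean_le_of_max_slope_ge1 //.
  by rewrite subrr mul0r addr0 mul1r.
have h01 : 0 <= h <= 1 by rewrite max_slope_ge0 // ltW.
have h1' : 1 - h != 0 by rewrite subr_eq0 gt_eqF.
pose b := (m - h * alpha) / (1 - h).
exists _, _, (bernoulli_prob h), (two_point alpha b); split.
  apply: cx_le_two_point => //; last exact: stop_loss_two_point_le.
  by rewrite /b /m; field.
have ab : alpha < b := alpha_lt_two_point_atom Yint h1.
by rewrite cdf_two_point // lexx leNgt ab mulr0 addr0 mulr1.
Qed.
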